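(* Let $L$ be even, let $\mathcal{C}\in\mathsf{SCAC}(L,3)$ and let $\mathcal{I}=\{0,q_1,q_1+q_2\}\in\mathcal{C}$ with $q_1,q_2\ge 1$, $q_1+q_2<L$, and put $q_3=L-q_1-q_2$. Assume $q_1,q_2,q_3$ are pairwise distinct, and let $q_l<q_m<q_u$ be $q_1,q_2,q_3$ in increasing order, so that $d^*(\mathcal{I})=\{q_l,q_m,q_u,L-q_u,L-q_m,L-q_l\}$. If $q_u\ge L/2$, then (i) $|d^+(\mathcal{I})|=8$ if $q_m=q_l+1=(L+2)/4$ and $q_u=L/2$; and (ii) $|d^+(\mathcal{I})|\ge 10$ otherwise.
   Context: Identify $\mathbb{Z}_L$ with $\{0,1,\dots,L-1\}$; $\mathcal{P}(L,\omega)$ is the set of $\omega$-element subsets of $\mathbb{Z}_L$ (codewords). For $\mathcal{I}\in\mathcal{P}(L,\omega)$: $d(\mathcal{I})=\{a-b \bmod L: a,b\in\mathcal{I}\}$, $d^*(\mathcal{I})=d(\mathcal{I})\setminus\{0\}$, $d^+(\mathcal{I})=\{x+\epsilon \bmod L: x\in d^*(\mathcal{I}),\epsilon\in\{0,1\}\}$. A strongly conflict-avoiding code (SCAC) of length $L$ and weight $\omega$ is a set $\mathcal{C}=\{\mathcal{I}_1,\dots,\mathcal{I}_M\}\subseteq\mathcal{P}(L,\omega)$ such that for all $j\ne k$, $\big(d^*(\mathcal{I}_j)\cup(d^*(\mathcal{I}_j)+1)\cup(d^*(\mathcal{I}_j)-1)\big)\cap d(\mathcal{I}_k)=\emptyset$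 (shifts mod $L$); $\mathsf{SCAC}(L,\omega)$ is the class of all such codes. (Equivalently: $\{1,L-1\}\cap d^*(\mathcal{I}_j)=\emptyset$ for all $j$ and $d^+(\mathcal{I}_j)\cap d^+(\mathcal{I}_k)=\emptyset$ for $j\ne k$.) *)

(* Z_L is modelled by 'I_L (values 0..L-1), arithmetic mod L on nat values. *)
From mathcomp Require Import all_boot.
Set Implicit Arguments. Unset Strict Implicit. Unset Printing Implicit Defensive.

Definition dset (L : nat) (I : {set 'I_L}) : {set 'I_L} :=
  [set x : 'I_L | [exists a in I, exists b in I, val x == (val a + (L - val b)) %% L]].

Definition dstar (L : nat) (I : {set 'I_L}) : {set 'I_L} :=
  [set x in dset I | val x != 0].

Definition dplus (L : nat) (I : {set 'I_L}) : {set 'I_L} :=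
  [set x : 'I_L | [exists y in dstar I, (val x == val y %% L) || (val x == (val y + 1) %% L)]].

(* SCAC(L, w), in the "equivalent" form given in the context:
   every codeword has w elements, {1, L-1} does not meet d*(I_j),
   and d+(I_j), d+(I_k) are disjoint for distinct codewords. *)
Definition is_SCAC (L w : nat) (C : {set {set 'I_L}}) : Prop :=
  (forall I, I \in C -> #|I| = w) /\
  (forall I, I \in C -> forall x, x \in dstar I -> val x != 1 /\ val x != L - 1) /\
  (forall J K, J \in C -> K \in C -> J != K -> [disjoint dplus J & dplus K]).

From mathcomp Require Import all_boot zify.

Set Implicit Arguments.
Unset Strict Implicit.
Unset Printing Implicit Defensive.

(* The gaps q_l < q_m < q_u of the codeword sum to L, so d*(I) lists as
   q_l < q_m < L - q_u <= q_u < L - q_m < L - q_l, the middle two coinciding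
   exactly when q_u = L/2; the SCAC condition forbids the difference 1, so
   q_l >= 2 and nothing wraps around modulo L.  For a set S of integers,
   |S u (S+1)| is |S| plus the number of maximal runs of consecutive elements
   of S.  Here the only possible adjacencies are q_m = q_l + 1 and its mirror
   L - q_l = L - q_m + 1 (L - q_u + 1 = q_u is excluded since L is even), so
   |d+(I)| is 12 or 10, minus 2 when q_m = q_l + 1. *)

Definition residues (L : nat) (s : seq nat) : {set 'I_L} :=
  [set x : 'I_L | (x : nat) \in s].

Lemma eq_residues L (s t : seq nat) : s =i t -> residues L s = residues L t.
Proof. by move=> st; apply/setP => x; rewrite !inE st. Qed.

Lemma card_residues L (s : seq nat) : all (fun n => n < L) s ->
  #|residues L s| = size (undup s).
Proof.
move=> /allP sL; pose t : seq 'I_L := pmap insub (undup s).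
have -> : size (undup s) = size t.
  rewrite size_pmap_sub; apply/esym/eqP; rewrite -all_count.
  by apply/allP => n; rewrite mem_undup => /sL.
rewrite -(card_uniqP (pmap_sub_uniq _ (undup_uniq s))).
by apply: eq_card => x; rewrite inE mem_pmap_sub mem_undup.
Qed.

Lemma eq_mod_diff L x a b : x < L -> a < L -> b < L ->
  (x == (a + (L - b)) %% L) = (x + b == a) || (x + b == a + L).
Proof.
move=> xL aL bL; case: (leqP b a) => [ba|ab].
  by rewrite (_ : a + (L - b) = a - b + L) ?modnDr ?modn_small; lia.
by rewrite modn_small; lia.
Qed.

Lemma dstar_residuesP L (s : seq nat) (x : 'I_L) : all (fun n => n < L) s ->
  reflect (x != 0 :> nat /\ exists a b : nat,
             [/\ a \in s, b \in s & (x + b == a) || (x + b == a + L)])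
          (x \in dstar (residues L s)).
Proof.
move=> /allP sL; rewrite /dstar /dset /residues !inE andbC.
apply: (iffP andP) =>
  [[x0 /existsP[a /andP[aS /existsP[b /andP[bS xab]]]]]|[x0 [a [b [aS bS xab]]]]].
  rewrite !inE in aS bS; split=> //; exists (val a), (val b).
  by rewrite aS bS -eq_mod_diff ?ltn_ord.
split=> //; apply/existsP; exists (Ordinal (sL a aS)); rewrite inE aS /=.
by apply/existsP; exists (Ordinal (sL b bS)); rewrite inE bS /= eq_mod_diff ?ltn_ord ?sL.
Qed.

Lemma dstar_triple L q1 q2 : 0 < q1 -> 0 < q2 -> q1 + q2 < L ->
  let gaps := [:: q1; q2; L - q1 - q2] in
  dstar (residues L [:: 0; q1; q1 + q2]) = residues L (gaps ++ map (subn L) gaps).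
Proof.
move=> q1P q2P q12L gaps.
have sL : all (fun n => n < L) [:: 0; q1; q1 + q2] by rewrite /=; lia.
apply/setP => x; have xL := ltn_ord x; rewrite [RHS]inE.
apply/idP/idP => [/(dstar_residuesP x sL)[x0 [a [b []]]]|].
  by rewrite !inE => /or3P[]/eqP-> /or3P[]/eqP->; lia.
move=> xD; apply/(dstar_residuesP x sL); rewrite !inE in xD; split; first by move: xD; lia.
by case/or4P: xD => [|||/or3P[||]] /eqP xd;
  [exists q1, 0 | exists (q1 + q2), q1 | exists 0, (q1 + q2)
  | exists 0, q1 | exists q1, (q1 + q2) | exists (q1 + q2), 0];
  split; rewrite ?inE ?eqxx ?orbT //; lia.
Qed.

Definition succ_closure (s : seq nat) : seq nat := flatten [seq [:: d; d.+1] | d <- s].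

Lemma succ_closure_cons d s : succ_closure (d :: s) = [:: d, d.+1 & succ_closure s].
Proof. by []. Qed.

Lemma mem_succ_closure s n :
  (n \in succ_closure s) = has (fun d => (n == d) || (n == d.+1)) s.
Proof. by elim: s => //= d s IH; rewrite !inE IH orbA. Qed.

Lemma dplus_residues L (D : {set 'I_L}) (s : seq nat) :
  dstar D = residues L s -> all (fun d => d.+1 < L) s ->
  dplus D = residues L (succ_closure s).
Proof.
move=> Ds /allP sL; apply/setP => x; rewrite /dplus [RHS]inE mem_succ_closure inE.
apply/existsP/hasP => [[y /andP[]]|[d ds xd]].
  rewrite Ds inE => ys; have yL := sL _ ys.
  rewrite addn1 (modn_small (ltn_ord y)) (modn_small yL) => xy.
  by exists (y : nat).
have dL : d < L by rewrite ltnW ?sL.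
exists (Ordinal dL); rewrite Ds inE ds /=.
by rewrite (modn_small dL) addn1 (modn_small (sL _ ds)).
Qed.

Lemma succ_closure_gt y s : all (fun d => y < d) s -> all (fun n => y < n) (succ_closure s).
Proof. by elim: s => //= d s IH /andP[yd /IH ->]; rewrite yd ltnW. Qed.

Lemma size_undup_cons (T : eqType) (a : T) (t : seq T) :
  size (undup (a :: t)) = (a \notin t) + size (undup t).
Proof. by rewrite /=; case: (a \in t). Qed.

Lemma size_undup_succ_closure x s : path ltn x s ->
  size (undup (succ_closure (x :: s))) =
  (size s).+2 + count id (pairmap (fun a b => a.+1 != b) x s).
Proof.
elim: s x => [|y s IH] x; first by rewrite /= inE ltn_eqF.
move=> /andP[xy ys].
have notin_rest n : n <= y -> (n \in succ_closure s) = false.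
  move=> ny; apply/negP => /(allP (succ_closure_gt (order_path_min ltn_trans ys))).
  by rewrite ltnNge ny.
have x_fresh : x \in x.+1 :: succ_closure (y :: s) = false.
  by rewrite succ_closure_cons !inE notin_rest ?(ltnW xy) //; lia.
have x1_fresh : (x.+1 \notin succ_closure (y :: s)) = (x.+1 != y).
  by rewrite succ_closure_cons !inE notin_rest //; lia.
by rewrite succ_closure_cons 2!size_undup_cons x_fresh x1_fresh IH //=; lia.
Qed.

Lemma card_dplus_sorted L (D : {set 'I_L}) x s :
  dstar D = residues L (x :: s) -> path ltn x s -> all (fun d => d.+1 < L) (x :: s) ->
  #|dplus D| = (size s).+2 + count id (pairmap (fun a b => a.+1 != b) x s).
Proof.
move=> Ds xs sL; rewrite (dplus_residues Ds sL) card_residues ?size_undup_succ_closure //.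
apply/allP => n; rewrite mem_succ_closure => /hasP[d /(allP sL) dL /orP[]/eqP->] //.
exact: ltnW.
Qed.

Lemma SCAC_dstar_range L w (C : {set {set 'I_L}}) I s :
  is_SCAC w C -> I \in C -> dstar I = residues L s ->
  {in s, forall d, d < L -> 1 < d < L.-1}.
Proof.
move=> [_ [no_adjacent _]] IC Is d ds dL; have dI : Ordinal dL \in dstar I by rewrite Is inE.
have [/= d1 dL1] := no_adjacent _ IC _ dI.
have /= d0 : val (Ordinal dL) != 0 by move: dI; rewrite inE => /andP[].
lia.
Qed.

Lemma card_dplus_gaps L (D : {set 'I_L}) ql qm qu :
  ~~ odd L -> 1 < ql -> ql < qm -> qm < qu -> ql + qm + qu = L -> L <= 2 * qu ->
  dstar D = residues L ([:: ql; qm; qu] ++ map (subn L) [:: ql; qm; qu]) ->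
  ((qm = ql + 1 /\ 4 * qm = L + 2 /\ 2 * qu = L) -> #|dplus D| = 8) /\
  (~ (qm = ql + 1 /\ 4 * qm = L + 2 /\ 2 * qu = L) -> 10 <= #|dplus D|).
Proof.
move=> evenL ql_gt1 lm mu sum_q Lqu dstarD.
(* When 2 * qu = L the differences L - qu and qu coincide. *)
have [L_lt|L_eq] : L < 2 * qu \/ 2 * qu = L by lia.
  rewrite (@card_dplus_sorted _ _ ql [:: qm; L - qu; qu; L - qm; L - ql]) /=.
  - by split=> [[_ [_ ?]] | _]; lia.
  - by rewrite dstarD; apply/eq_residues/perm_mem/permP => p /=; lia.
  - lia.
  - lia.
rewrite (@card_dplus_sorted _ _ ql [:: qm; qu; L - qm; L - ql]) /=.
- by split=> [[-> _] | not_tight]; lia.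
- by rewrite dstarD; apply: eq_residues => n; rewrite !inE; lia.
- lia.
- lia.
Qed.

Theorem mainTheorem2 (L : nat) (C : {set {set 'I_L}}) (q1 q2 : nat) :
  ~~ odd L ->
  is_SCAC 3 C ->
  0 < q1 -> 0 < q2 -> q1 + q2 < L ->
  [set x : 'I_L | val x \in [:: 0; q1; q1 + q2]] \in C ->
  let q3 := L - q1 - q2 in
  q1 != q2 -> q2 != q3 -> q1 != q3 ->
  forall ql qm qu : nat,
    perm_eq [:: ql; qm; qu] [:: q1; q2; q3] -> ql < qm -> qm < qu ->
    L <= 2 * qu ->
    let I := [set x : 'I_L | val x \in [:: 0; q1; q1 + q2]] in
    ((qm = ql + 1 /\ 4 * qm = L + 2 /\ 2 * qu = L) -> #|dplus I| = 8) /\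
    (~ (qm = ql + 1 /\ 4 * qm = L + 2 /\ 2 * qu = L) -> 10 <= #|dplus I|).
Proof.
move=> evenL scac q1P q2P q12L IC q3 _ _ _ ql qm qu perm_q lm mu Lqu I.
have sum_q : ql + qm + qu = L by move: (perm_sumn perm_q); rewrite /= /q3; lia.
have dstarI : dstar I = residues L ([:: ql; qm; qu] ++ map (subn L) [:: ql; qm; qu]).
  rewrite (dstar_triple q1P q2P q12L); apply/eq_residues/perm_mem.
  by rewrite perm_sym perm_cat ?perm_map.
have /andP[ql_gt1 _] := SCAC_dstar_range scac IC dstarI (mem_head _ _) ltac:(lia).
exact: card_dplus_gaps.
Qed.
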